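(* Let $\lambda\in\mathbf{C}$ with $\lambda\neq1$, let $r,n\in\mathbf{Z}_{+}$ (nonnegative integers), and let $p(x)\in\mathbb{P}_{n}(\lambda)$ be written as $p(x)=\sum_{k=0}^{n}C_{k}H_{k}^{(r)}(x\vert\lambda)$ with $C_{k}\in\mathbf{Q}(\lambda)$. Then for each $k=0,\dots,n$, \[ C_{k}=\frac{1}{(1-\lambda)^{r}k!}\sum_{j=0}^{r}\binom{r}{j}(-\lambda)^{r-j}D^{k}p(j), \] that is, \[ p(x)=\frac{1}{(1-\lambda)^{r}}\sum_{k=0}^{n}\Bigl(\sum_{j=0}^{r}\frac{1}{k!}\binom{r}{j}(-\lambda)^{r-j}D^{k}p(j)\Bigr)H_{k}^{(r)}(x\vert\lambda). \]
   Context: For $\lambda\in\mathbf{C}$, $\lambda\neq1$, and $r\in\mathbf{Z}_{+}$, the Frobenius–Euler polynomials of order $r$ are defined by $\left(\frac{1-\lambda}{e^{t}-\lambda}\right)^{r}e^{xt}=\sum_{n=0}^{\infty}H_{n}^{(r)}(x\vert\lambda)\frac{t^{n}}{n!}$; each $H_n^{(r)}(x\vert\lambda)$ is monic of degree $n$ with coefficients in $\mathbf{Q}(\lambda)$. $\mathbb{P}_{n}(\lambda)$ is the $\mathbf{Q}(\lambda)$-vector space of polynomials in $x$ with coefficients in $\mathbf{Q}(\lambda)$ of degree at most $n$, and $\{H_0^{(r)}(x\vert\lambda),\dots,H_n^{(r)}(x\vert\lambda)\}$ is a basis of it. $D$ denotes differentiation $d/dx$, and $D^kp(j)$ is the $k$-th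 derivative of $p$ evaluated at $x=j$. *)

From mathcomp Require Import all_boot all_order all_algebra.
Set Implicit Arguments. Unset Strict Implicit. Unset Printing Implicit Defensive.
Import GRing.Theory.
Local Open Scope ring_scope.

(* Formal power series in t are represented by their coefficient sequences
   nat -> R (coefficient of t^m, ordinary, not divided by m!). *)
Section Series.
Variable R : comNzRingType.
Definition serone : nat -> R := fun m => (m == 0%N)%:R.
Definition sermul (f g : nat -> R) : nat -> R :=
  fun m => \sum_(i < m.+1) f i * g (m - i)%N.
Definition serpow (f : nat -> R) (k : nat) : nat -> R := iter k (sermul f) serone.
End Series.

Section FrobeniusEuler.
Variable K : fieldType.

(* multiplicative inverse of a series f with invertible constant term f 0:
   1/f = f0^-1 * sum_k (1 - f/f0)^k ; (1 - f/f0) has zero constant term so the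
   sum is finite coefficientwise. *)
Definition serinv (f : nat -> {poly K}) : nat -> {poly K} :=
  let c := (f 0%N)^-1 in
  let g := fun m => serone _ m - c * f m in
  fun m => c * \sum_(k < m.+1) serpow g k m.

(* e^t - lambda, with constant polynomial coefficients *)
Definition exp_minus (lam : K) : nat -> {poly K} :=
  fun m => ((m`!%:R)^-1 - (m == 0%N)%:R * lam)%:P.

(* e^{x t}, x the polynomial variable *)
Definition exp_xt : nat -> {poly K} := fun m => (m`!%:R)^-1 *: 'X^m.

(* ((1-lambda)/(e^t-lambda))^r e^{xt} *)
Definition FE_gf (lam : K) (r : nat) : nat -> {poly K} :=
  sermul (serpow (fun m => (1 - lam)%:P * serinv (exp_minus lam) m) r) exp_xt.

Definition FEpoly (lam : K) (r n : nat) : {poly K} := n`!%:R *: FE_gf lam r n.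
End FrobeniusEuler.

From mathcomp Require Import all_boot all_order all_algebra.
From mathcomp Require Import ring zify.
Set Implicit Arguments. Unset Strict Implicit. Unset Printing Implicit Defensive.
Import GRing.Theory.
Local Open Scope ring_scope.

(* The functional [L_k q = \sum_j 'C(r, j) (-lam)^(r - j) (D^k q)(j)] is
   biorthogonal to the Frobenius-Euler basis: [L_k H_l = (l == k) k! (1 - lam)^r].
   Apply [L_k] coefficientwise in [t] to [((1 - lam) / (e^t - lam))^r e^(xt)]:
   [D^k] multiplies [e^(xt)] by [t^k], and [\sum_j 'C(r, j) (-lam)^(r - j) e^(jt)]
   is [(e^t - lam)^r], so the image is [(1 - lam)^r t^k].  Equalities of formal
   power series are checked on their polynomial truncations. *)

Section TakePoly.
Variable R : comNzRingType.
Implicit Types p q : {poly R}.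

Lemma take_polyMl m p q : take_poly m (take_poly m p * q) = take_poly m (p * q).
Proof.
apply/polyP=> i; rewrite !coef_take_poly; case: ifP => // lt_im.
rewrite !coefM; apply: eq_bigr => j _; rewrite coef_take_poly.
by have -> : (j < m)%N by move: lt_im (ltn_ord j); lia.
Qed.

Lemma take_polyMr m p q : take_poly m (p * take_poly m q) = take_poly m (p * q).
Proof. by rewrite mulrC take_polyMl mulrC. Qed.

Lemma take_poly_exp m p k : take_poly m (take_poly m p ^+ k) = take_poly m (p ^+ k).
Proof.
elim: k => [|k IHk]; first by rewrite !expr0.
by rewrite !exprS take_polyMl -take_polyMr IHk take_polyMr.
Qed.

Lemma take_polyC m (c : R) : (0 < m)%N -> take_poly m c%:P = c%:P.
Proof. by move=> m_gt0; rewrite take_poly_id // (leq_trans (size_polyC_leq1 c)). Qed.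

Lemma coef_expr_eq0 p k i : p`_0 = 0 -> (i < k)%N -> (p ^+ k)`_i = 0.
Proof.
move=> p0; elim: k i => [|k IHk] i // lt_ik.
rewrite exprS coefM big1 // => -[[|j] lt_ji] _ /=; first by rewrite p0 mul0r.
by rewrite IHk ?mulr0 //; lia.
Qed.

Lemma take_poly_geometric n p :
  p`_0 = 0 -> take_poly n.+1 ((\sum_(k < n.+1) p ^+ k) * (1 - p)) = 1.
Proof.
move=> p0; rewrite mulrC -opprB mulNr -subrX1 opprB take_polyD linearN /=.
have -> : take_poly n.+1 (p ^+ n.+1) = 0.
  by apply/polyP=> i; rewrite coef_take_poly coef0; case: ifP => //; apply: coef_expr_eq0.
by rewrite subr0 -[1]/(1%:P) take_polyC.
Qed.

End TakePoly.

Section Series.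
Variable R : comNzRingType.
Implicit Types f g : nat -> R.

Definition ser_trunc n f : {poly R} := \poly_(i < n.+1) f i.

Lemma coef_ser_trunc n f i : (i <= n)%N -> (ser_trunc n f)`_i = f i.
Proof. by move=> le_in; rewrite coef_poly ltnS le_in. Qed.

Lemma ser_trunc_inj f g : (forall n, ser_trunc n f = ser_trunc n g) -> f =1 g.
Proof. by move=> eq_fg n; rewrite -(coef_ser_trunc f (leqnn n)) eq_fg coef_ser_trunc. Qed.

Lemma ser_trunc_sermul n f g :
  ser_trunc n (sermul f g) = take_poly n.+1 (ser_trunc n f * ser_trunc n g).
Proof.
apply/polyP=> i; rewrite coef_take_poly coef_poly; case: ifP => // lt_in.
rewrite coefM; apply: eq_bigr => j _; rewrite !coef_poly.
have -> : (j < n.+1)%N by move: lt_in (ltn_ord j); lia.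
by have -> : (i - j < n.+1)%N by move: lt_in (ltn_ord j); lia.
Qed.

Lemma ser_trunc_scale_serone n c : ser_trunc n (fun m => c * serone R m) = c%:P.
Proof.
apply/polyP=> -[|i]; rewrite coef_poly coefC /serone /= ?mulr1 //.
by rewrite mulr0; case: ifP.
Qed.

Lemma ser_trunc_serone n : ser_trunc n (serone R) = 1.
Proof.
rewrite -[RHS]/(1%:P) -(ser_trunc_scale_serone n).
by apply/polyP=> i; rewrite !coef_poly mul1r.
Qed.

Lemma ser_trunc_serpow n f k :
  ser_trunc n (serpow f k) = take_poly n.+1 (ser_trunc n f ^+ k).
Proof.
elim: k => [|k IHk]; first by rewrite expr0 take_polyC // ser_trunc_serone.
by rewrite /serpow iterS -/(serpow f k) ser_trunc_sermul IHk take_polyMr exprS.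
Qed.

Lemma sermul_serpow_const f g c k :
  (forall m, sermul f g m = c * serone R m) ->
  forall m, sermul (serpow f k) (serpow g k) m = c ^+ k * serone R m.
Proof.
move=> fg_c; apply: ser_trunc_inj => n.
rewrite ser_trunc_sermul !ser_trunc_serpow take_polyMl take_polyMr -exprMn.
rewrite -take_poly_exp -ser_trunc_sermul.
have -> : ser_trunc n (sermul f g) = ser_trunc n (fun m => c * serone R m).
  by apply/polyP=> i; rewrite !coef_poly fg_c.
by rewrite !ser_trunc_scale_serone -rmorphXn take_polyC.
Qed.

Lemma sum_sermul_shift f g k l :
  \sum_(i < l.+1) (if (k <= l - i)%N then f i * g (l - i - k)%N else 0) =
  if (k <= l)%N then sermul f g (l - k) else 0.
Proof.
case: leqP => [le_kl | lt_lk]; last by rewrite big1 // => i _; case: leqP => //; lia.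
rewrite /sermul (big_ord_widen l.+1 (fun i => f i * g (l - k - i)%N)) ?ltnS ?leq_subr //.
rewrite [RHS]big_mkcond; apply: eq_bigr => i _.
have lt_il := ltn_ord i; case: leqP => [le_k|lt_k]; case: ltnP => //; try lia.
by move=> _; congr (_ * g _); lia.
Qed.

End Series.

Section SeriesMorphism.
Variables (R S : comNzRingType) (phi : {rmorphism R -> S}).

Lemma sermul_rmorph F G f g : F =1 phi \o f -> G =1 phi \o g ->
  sermul F G =1 phi \o sermul f g.
Proof.
move=> Ff Gg m; rewrite /sermul /= rmorph_sum; apply: eq_bigr => i _.
by rewrite rmorphM Ff Gg.
Qed.

Lemma serpow_rmorph F f k : F =1 phi \o f -> serpow F k =1 phi \o serpow f k.
Proof.
move=> Ff; elim: k => [|k IHk] m; first by rewrite /serpow /= /serone rmorph_nat.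
by rewrite /serpow !iterS; apply: sermul_rmorph.
Qed.

End SeriesMorphism.

(* [serinv] is this construction over [{poly K}]. *)
Definition ser_inv (R : comUnitRingType) (f : nat -> R) : nat -> R :=
  let c := (f 0%N)^-1 in
  let g := fun m => serone _ m - c * f m in
  fun m => c * \sum_(k < m.+1) serpow g k m.

Lemma sermul_ser_invl (R : comUnitRingType) (f : nat -> R) :
  f 0%N \is a GRing.unit -> sermul (ser_inv f) f =1 serone R.
Proof.
move=> f0_unit; apply: ser_trunc_inj => n.
set c := (f 0%N)^-1; set g := fun m => serone R m - c * f m.
have trunc_g : ser_trunc n g = 1 - c *: ser_trunc n f.
  apply/polyP=> -[|i]; rewrite coefB coefZ coef1 !coef_poly /g /serone //=.
  by case: ifP; rewrite ?mulr0 ?subr0.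
have g0 : (ser_trunc n g)`_0 = 0 by rewrite coef_ser_trunc // /g /serone mulVr ?subrr.
have trunc_inv : ser_trunc n (ser_inv f) =
                 c *: take_poly n.+1 (\sum_(k < n.+1) ser_trunc n g ^+ k).
  apply/polyP=> i; rewrite coefZ coef_poly coef_take_poly.
  case: ifP => lt_in; last by rewrite mulr0.
  congr (_ * _); rewrite coef_sum (big_ord_widen n.+1 (fun k => serpow g k i) lt_in).
  rewrite big_mkcond /=; apply: eq_bigr => k _; case: ifP => lt_ki.
    by rewrite -(@coef_ser_trunc _ n _ i) // ser_trunc_serpow coef_take_poly lt_in.
  by rewrite coef_expr_eq0 //; lia.
have cf : c *: ser_trunc n f = 1 - ser_trunc n g by rewrite trunc_g opprB addrC subrK.
rewrite ser_trunc_sermul trunc_inv ser_trunc_serone -scalerAl take_polyZ take_polyMl.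
by rewrite -take_polyZ scalerAr cf take_poly_geometric.
Qed.

Lemma serinv_polyC (K : fieldType) (f : nat -> K) m :
  serinv (fun m => (f m)%:P) m = (ser_inv f m)%:P.
Proof.
rewrite /serinv /ser_inv polyCV rmorphM rmorph_sum /=; congr (_ * _).
apply: eq_bigr => k _.
rewrite (serpow_rmorph (phi := @polyC K) (f := fun m => serone K m - (f 0%N)^-1 * f m)) // => i /=.
by rewrite rmorphB rmorphM /= /serone rmorph_nat.
Qed.

Section FrobeniusEulerDual.
Variables (K : fieldType) (lam : K) (r : nat).
Hypothesis char0 : [pchar K] =i pred0.

Lemma natf_neq0 n : (0 < n)%N -> (n%:R : K) != 0.
Proof. by move=> n_gt0; move/pcharf0P: char0 => ->; rewrite -lt0n. Qed.

(* [((E - lam) ^ r q)(0)] for the shift operator [E : q(x) |-> q(x + 1)]. *)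
Definition fe_diff (q : {poly K}) : K :=
  \sum_(j < r.+1) 'C(r, j)%:R * (- lam) ^+ (r - j) * q.[j%:R].

Lemma fe_diff_sum n (c : nat -> K) (q : nat -> {poly K}) :
  fe_diff (\sum_(i < n) c i *: q i) = \sum_(i < n) c i * fe_diff (q i).
Proof.
rewrite /fe_diff; under eq_bigr do rewrite horner_sum mulr_sumr.
rewrite exchange_big; apply: eq_bigr => i _; rewrite mulr_sumr.
by apply: eq_bigr => j _; rewrite hornerZ mulrCA.
Qed.

Definition exp_ser : nat -> K := fun m => (m`!%:R)^-1.
Definition exp_sub_ser : nat -> K := fun m => exp_ser m - (m == 0%N)%:R * lam.

Lemma serpow_exp_ser j i : serpow exp_ser j i = j%:R ^+ i / i`!%:R.
Proof.
elim: j i => [|j IHj] i.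
  by rewrite /serpow /= /serone expr0n; case: i => [|i] /=; rewrite ?invr1 ?mulr1 ?mul0r.
rewrite /serpow iterS -/(serpow _ j) /sermul -natr1 exprDn mulr_suml.
apply: eq_bigr => a _; rewrite IHj /exp_ser expr1n mulr1 -mulr_natr.
have le_ai : (a <= i)%N by rewrite -ltnS.
rewrite -(bin_fact le_ai) !natrM.
have bin_neq0 : ('C(i, a)%:R : K) != 0 by apply: natf_neq0; rewrite bin_gt0.
by field; rewrite bin_neq0 !natf_neq0 ?fact_gt0.
Qed.

Lemma fe_diff_exp_xt m : fe_diff (exp_xt K m) = serpow exp_sub_ser r m.
Proof.
have trunc_exp_sub : ser_trunc m exp_sub_ser = (- lam)%:P + ser_trunc m exp_ser.
  apply/polyP=> -[|i]; rewrite coefD coefC !coef_poly /exp_sub_ser /exp_ser /=.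
    by rewrite mul1r addrC.
  by rewrite mul0r subr0 add0r.
have coef_trunc_pow (f : nat -> K) k : (ser_trunc m f ^+ k)`_m = serpow f k m.
  by rewrite -(coef_ser_trunc (serpow f k) (leqnn m)) ser_trunc_serpow coef_take_poly ltnSn.
rewrite -coef_trunc_pow trunc_exp_sub exprDn coef_sum; apply: eq_bigr => j _.
rewrite coefMn -rmorphXn coefCM coef_trunc_pow serpow_exp_ser /exp_xt hornerZ hornerXn.
by rewrite -[RHS]mulr_natl; ring.
Qed.

Lemma derivn_exp_xt k m :
  (exp_xt K m)^`(k) = if (k <= m)%N then exp_xt K (m - k) else 0.
Proof.
rewrite /exp_xt derivnZ derivnXn; case: leqP => [le_km | lt_mk].
  rewrite -scaler_nat scalerA -(ffact_fact le_km) natrM invfM -mulrA mulrCA.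
  by rewrite mulVf ?mulr1 // natf_neq0 // ffact_gt0.
by rewrite ffact_small // mulr0n scaler0.
Qed.

Hypothesis lam_neq1 : lam != 1.

Definition fe_factor : nat -> K := fun m => (1 - lam) * ser_inv exp_sub_ser m.

Lemma sermul_fe_factor_exp_sub m :
  sermul (serpow fe_factor r) (serpow exp_sub_ser r) m = (1 - lam) ^+ r * serone K m.
Proof.
apply: sermul_serpow_const => {}m.
have exp_sub0 : exp_sub_ser 0 \is a GRing.unit.
  by rewrite unitfE /exp_sub_ser /exp_ser /= invr1 mul1r subr_eq0 eq_sym.
rewrite -(sermul_ser_invl exp_sub0 m) /sermul mulr_sumr; apply: eq_bigr => i _.
by rewrite mulrA.
Qed.

Lemma FEpoly_expansion l : FEpoly lam r l =
  \sum_(i < l.+1) (l`!%:R * serpow fe_factor r i) *: exp_xt K (l - i).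
Proof.
rewrite /FEpoly /FE_gf /sermul scaler_sumr; apply: eq_bigr => i _.
rewrite -scalerA (serpow_rmorph (phi := @polyC K) (f := fe_factor)) ?mul_polyC // => m.
by rewrite -[exp_minus lam]/(fun m => (exp_sub_ser m)%:P) serinv_polyC -rmorphM.
Qed.

Lemma fe_diff_derivn_FEpoly k l :
  fe_diff (FEpoly lam r l)^`(k) = (l == k)%:R * (l`!%:R * (1 - lam) ^+ r).
Proof.
have fe_diff0 : fe_diff 0 = 0 by rewrite /fe_diff big1 // => j _; rewrite horner0 mulr0.
rewrite FEpoly_expansion raddf_sum /=.
under eq_bigr do rewrite derivnZ.
rewrite (fe_diff_sum _ (fun i => l`!%:R * serpow fe_factor r i)
                    (fun i => (exp_xt K (l - i))^`(k))).
under eq_bigr => i _ do rewrite derivn_exp_xt (fun_if fe_diff) fe_diff_exp_xt fe_diff0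
  -mulrA (fun_if (fun x => _ * x)) mulr0.
rewrite -mulr_sumr sum_sermul_shift.
case: leqP => [le_kl | lt_lk]; last by rewrite ltn_eqF // mul0r mulr0.
by rewrite sermul_fe_factor_exp_sub /serone subn_eq0 eqn_leq le_kl andbT; ring.
Qed.

Lemma fe_diff_derivn_FEcomb n (C : nat -> K) k : (k <= n)%N ->
  fe_diff (\sum_(l < n.+1) C l *: FEpoly lam r l)^`(k) =
  C k * (k`!%:R * (1 - lam) ^+ r).
Proof.
move=> le_kn; rewrite raddf_sum /=; under eq_bigr do rewrite derivnZ.
rewrite (fe_diff_sum _ C (fun l => (FEpoly lam r l)^`(k))).
under eq_bigr do rewrite fe_diff_derivn_FEpoly.
rewrite (bigD1 (Ordinal (le_kn : (k < n.+1)%N))) //= eqxx mul1r big1 ?addr0 //.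
by move=> l /negbTE; rewrite -val_eqE /= => ->; rewrite mul0r mulr0.
Qed.
End FrobeniusEulerDual.

Unset Implicit Arguments.

Theorem theorem5 (K : fieldType) (hK : [pchar K] =i pred0)
  (lam : K) (hlam : lam != 1) (r n : nat) (p : {poly K}) (C : nat -> K)
  (hp : p = \sum_(k < n.+1) C k *: FEpoly lam r k) :
  forall k : nat, (k <= n)%N ->
    C k = ((1 - lam) ^+ r * k`!%:R)^-1 *
          \sum_(j < r.+1) 'C(r, j)%:R * (- lam) ^+ (r - j) * (p^`(k)).[j%:R].
Proof.
move=> k le_kn.
have := fe_diff_derivn_FEcomb r hK hlam C le_kn; rewrite -hp /fe_diff => ->.
have fact_neq0 := natf_neq0 hK (fact_gt0 k).
have lam_sub_neq0 : (1 - lam) ^+ r != 0 by rewrite expf_neq0 // subr_eq0 eq_sym.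
by field; rewrite fact_neq0 lam_sub_neq0.
Qed.
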